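(* Let $r\ge 2$ and let $GT(r)$ be the glued binary tree of depth $r$. Then $\mathrm{gp}(GT(r))=2^r$.
   Context: The complete binary tree of depth $r$ is the rooted tree in which every non-leaf vertex has exactly two children and all $2^r$ leaves are at distance $r$ from the root. The glued binary tree $GT(r)$ is obtained from two copies of the complete binary tree of depth $r$ by identifying each leaf of the first copy with the corresponding leaf of the second copy (so it has $2^r$ identified vertices, called quasi-leaves). A set of vertices of a graph is a general position set if no three of its vertices lie on a common geodesic (shortest path); $\mathrm{gp}(G)$ is the maximum cardinality of a general position set of $G$. *)

From mathcomp Require Import all_boot.
Set Implicit Arguments. Unset Strict Implicit. Unset Printing Implicit Defensive.

Section Graph.
Variables (V : finType) (adj : rel V).

Definition walk (x : V) (p : seq V) (y : V) : bool :=
  path adj x p && (last x p == y).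

Definition geodesic (x : V) (p : seq V) : Prop :=
  path adj x p /\ forall q : seq V, walk x q (last x p) -> size p <= size q.

Definition on_common_geodesic (u v w : V) : Prop :=
  exists (x : V) (p : seq V),
    geodesic x p /\ [/\ u \in x :: p, v \in x :: p & w \in x :: p].

Definition gp_set (S : {set V}) : Prop :=
  forall u v w : V, u \in S -> v \in S -> w \in S ->
    u != v -> v != w -> u != w -> ~ on_common_geodesic u v w.

Definition is_gp_number (n : nat) : Prop :=
  (exists S : {set V}, gp_set S /\ #|S| = n) /\
  (forall S : {set V}, gp_set S -> #|S| <= n).
End Graph.

(* Vertices of the complete binary tree of depth r are labelled by heap
   indices i in [1, 2^(r+1)): the root is 1, the children of i are 2i and
   2i+1, and the leaves are the i with 2^r <= i < 2^(r+1).
   A vertex of GT(r) is a pair (c, i): c : bool selects the copy, and the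
   leaves (quasi-leaves) are identified, represented canonically with c = false. *)
Definition gt_valid (r : nat) (x : bool * 'I_(2 ^ r.+1)) : bool :=
  (0 < x.2) && ((2 ^ r <= x.2) ==> ~~ x.1).

Definition GTV (r : nat) : finType := {x : bool * 'I_(2 ^ r.+1) | @gt_valid r x}.

Definition gt_child (r : nat) (x y : bool * 'I_(2 ^ r.+1)) : bool :=
  (y.2./2 == x.2) && (if y.2 < 2 ^ r then x.1 == y.1 else true).

Definition gt_adj (r : nat) : rel (GTV r) :=
  fun x y => gt_child (val x) (val y) || gt_child (val y) (val x).

From mathcomp Require Import all_boot zify.
Set Implicit Arguments. Unset Strict Implicit. Unset Printing Implicit Defensive.

(* The 2^r quasi-leaves are in general position.  Two quasi-leaves whose heap
   indices first agree after dropping h bits are at distance exactly 2h, and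
   this height is an ultrametric; so for quasi-leaves a, b, c met in this order
   on a geodesic, d(a, c) <= 2 max (h(a, b), h(b, c)) < d(a, b) + d(b, c).

   Conversely, let S be in general position below a heap index k of height t
   (both copies, glued at the quasi-leaves); #|S| <= 2^t by induction on t.
   If no copy of k is in S, split S between the two children of k.  Otherwise
   let z in S be a copy of k.  Two vertices of S \ z above a common quasi-leaf
   l lie with z on the geodesic going down from z to l and up the other copy.
   Hence if S \ z has a non-leaf v0, sending each vertex to its leftmost
   quasi-leaf is injective and misses the rightmost quasi-leaf below v0, so
   #|S \ z| < 2^t.  If S \ z consists of quasi-leaves, they lie below a single
   child of k, since two quasi-leaves below different children lie on a
   geodesic through z, and induction applies. *)

Definition depth : nat -> nat := trunc_log 2.

Lemma depthE n i : 2 ^ n <= i < 2 ^ n.+1 -> depth i = n.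
Proof. exact: trunc_log_eq. Qed.

Lemma depth_bounds i : 0 < i -> 2 ^ depth i <= i < 2 ^ (depth i).+1.
Proof. exact: trunc_log_bounds. Qed.

Lemma depth_half i : 1 < i -> depth i = (depth i./2).+1.
Proof. exact: trunc_log2S. Qed.

Lemma depth_lt i n : 0 < i -> (depth i < n) = (i < 2 ^ n).
Proof.
move=> i0; have /andP[lo hi] := depth_bounds i0; apply/idP/idP => h.
  by apply: leq_trans hi _; rewrite leq_exp2l.
by rewrite -(ltn_exp2l _ _ (isT : 1 < 2)); apply: leq_ltn_trans lo h.
Qed.

Lemma depth_divn i s : 0 < i -> s <= depth i -> depth (i %/ 2 ^ s) = depth i - s.
Proof.
move=> i0 s_le; have /andP[lo hi] := depth_bounds i0.
apply: depthE; rewrite leq_divRL ?ltn_divLR ?expn_gt0 // -!expnD subnK //.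
by rewrite addSn subnK // lo.
Qed.

Lemma divn_exp2_gt0 i s : 0 < i -> s <= depth i -> 0 < i %/ 2 ^ s.
Proof.
move=> i0 s_le; have /andP[lo _] := depth_bounds i0.
by rewrite divn_gt0 ?expn_gt0 // (leq_trans _ lo) // leq_exp2l.
Qed.

Lemma divn_exp2_eq_mono u w s t :
  s <= t -> u %/ 2 ^ s = w %/ 2 ^ s -> u %/ 2 ^ t = w %/ 2 ^ t.
Proof. by move=> /subnKC <- e; rewrite expnD !divnMA e. Qed.

Definition ancestor (a i : nat) : bool := i %/ 2 ^ (depth i - depth a) == a.

Lemma ancestor_depth a i : ancestor a i -> depth a <= depth i.
Proof.
move=> /eqP ai; rewrite leqNgt; apply/negP => lt_ia.
have e : depth i - depth a = 0 by apply/eqP; rewrite subn_eq0 ltnW.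
by move: ai lt_ia; rewrite e expn0 divn1 => ->; rewrite ltnn.
Qed.

Lemma ancestor_divn i s : 0 < i -> s <= depth i -> ancestor (i %/ 2 ^ s) i.
Proof.
by move=> i0 s_le; rewrite /ancestor depth_divn // subKn.
Qed.

Lemma ancestor_trans a b i : ancestor a b -> ancestor b i -> ancestor a i.
Proof.
move=> ab bi; have le_ab := ancestor_depth ab.
have le_bi := ancestor_depth bi; move/eqP: ab => ab; move/eqP: bi => bi.
by rewrite /ancestor -(subnK le_bi) -addnBA // expnD divnMA bi ab.
Qed.

Lemma divn_exp2_depth i : 0 < i -> i %/ 2 ^ depth i = 1.
Proof.
move=> i0; have top_gt0 := divn_exp2_gt0 i0 (leqnn (depth i)).
have := depth_bounds top_gt0; rewrite depth_divn // subnn expn0; lia.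
Qed.

Lemma ancestor1 i : 0 < i -> ancestor 1 i.
Proof. by move=> i0; rewrite /ancestor /depth trunc_log1 subn0 divn_exp2_depth. Qed.

Lemma ancestor_exit a i j : 0 < i -> 0 < j -> ancestor a i -> ~~ ancestor a j ->
  j = i./2 \/ i = j./2 -> j = a./2.
Proof.
move=> i0 j0 ai naj [ji|ij].
  have i_gt1 : 1 < i by move: j0; rewrite ji; lia.
  have d_i := depth_half i_gt1; rewrite -ji in d_i.
  have := ancestor_depth ai; rewrite leq_eqVlt => /orP[/eqP d_ai|lt_ai].
    by move: ai; rewrite /ancestor d_ai subnn expn0 divn1 => /eqP <-.
  case/negP: naj; move: ai; rewrite /ancestor.
  have -> : depth i - depth a = (depth j - depth a).+1 by lia.
  by rewrite expnS divnMA divn2 -ji.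
have j_gt1 : 1 < j by move: i0; rewrite ij; lia.
case/negP: naj; apply: ancestor_trans ai _.
have := @ancestor_divn j 1 j0; rewrite expn1 divn2 -ij; apply.
by rewrite depth_half.
Qed.

Lemma ancestor_children a i : 0 < i -> ancestor a i -> i != a ->
  ancestor a.*2 i || ancestor a.*2.+1 i.
Proof.
move=> i0 ai ne_ia.
have lt_ai : depth a < depth i.
  rewrite ltn_neqAle ancestor_depth // andbT; apply: contra ne_ia => /eqP d_ai.
  by move: ai; rewrite /ancestor d_ai subnn expn0 divn1.
set s := depth i - depth a - 1.
have child_i : ancestor (i %/ 2 ^ s) i by apply: ancestor_divn; lia.
have half_child : (i %/ 2 ^ s)./2 = a.
  rewrite -divn2 -divnMA -expnSr (_ : s.+1 = depth i - depth a) //; first exact/eqP.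
  by rewrite /s; lia.
move: child_i; rewrite -(odd_double_half (i %/ 2 ^ s)) half_child.
by case: odd => ->; rewrite ?orbT.
Qed.

Definition leaf_below (r i j : nat) : nat := i * 2 ^ (r - depth i) + j.

Lemma depth_leaf_below r i j : 0 < i -> depth i <= r -> j < 2 ^ (r - depth i) ->
  depth (leaf_below r i j) = r.
Proof.
move=> i0 le_ir j_lt; have /andP[lo hi] := depth_bounds i0; apply: depthE.
have -> : 2 ^ r = 2 ^ depth i * 2 ^ (r - depth i) by rewrite -expnD subnKC.
have -> : 2 ^ r.+1 = 2 ^ (depth i).+1 * 2 ^ (r - depth i) by rewrite -expnD addSn subnKC.
apply/andP; split; first by rewrite (leq_trans _ (leq_addr _ _)) // leq_mul2r lo orbT.
apply: (@leq_trans (i.+1 * 2 ^ (r - depth i))); first by rewrite /leaf_below mulSn addnC ltn_add2r.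
by rewrite leq_mul2r hi orbT.
Qed.

Lemma ancestor_leaf_below r i j : 0 < i -> depth i <= r -> j < 2 ^ (r - depth i) ->
  ancestor i (leaf_below r i j).
Proof.
move=> i0 le_ir j_lt; rewrite /ancestor depth_leaf_below //.
by rewrite /leaf_below divnMDl ?expn_gt0 // divn_small // addn0.
Qed.

Lemma card_in_inj_lt (T T' : finType) (f : T -> T') (A : {set T}) y :
  {in A &, injective f} -> {in A, forall x, f x != y} -> #|A| < #|T'|.
Proof.
move=> f_inj f_miss; rewrite -(card_in_imset f_inj) -cardsT; apply: proper_card.
rewrite properT; apply/negP => /eqP fA.
have : y \in f @: A by rewrite fA inE.
by case/imsetP=> x xA /esym/eqP; apply/negP/f_miss.
Qed.

Section Walks.
Variables (V : finType) (e : rel V).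
Hypothesis e_sym : symmetric e.
Implicit Types (x y z : V) (p q : seq V).

Lemma walk_cat x y z p q : walk e x p y -> walk e y q z -> walk e x (p ++ q) z.
Proof. by case/andP=> pp /eqP <- /andP[pq lq]; rewrite /walk cat_path last_cat pp pq. Qed.

Lemma rev_belast_cons x p : last x p :: rev (belast x p) = rev (x :: p).
Proof. by rewrite -rev_rcons -lastI. Qed.

Lemma walk_rev x p y : walk e x p y -> walk e y (rev (belast x p)) x.
Proof.
case/andP=> pp /eqP <-; rewrite /walk rev_path (eq_path (fun u v => e_sym v u)) pp /=.
have := congr1 (last x) (rev_belast_cons x p).
by rewrite /= => ->; rewrite rev_cons last_rcons.
Qed.

Lemma walk_split x p y z : walk e x p y -> z \in x :: p ->
  exists p1 p2, [/\ walk e x p1 z, walk e z p2 y & size p = size p1 + size p2].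
Proof.
case/andP=> pp /eqP <- zp; case/splitPl: zp pp => p1 p2 lp1.
rewrite cat_path => /andP[w1 w2]; exists p1, p2.
by rewrite /walk w1 -lp1 w2 last_cat lp1 size_cat !eqxx.
Qed.

Lemma walk_lipschitz (f : V -> nat) x p y :
  (forall u v, e u v -> f u <= (f v).+1) -> walk e x p y ->
  f x <= f y + size p /\ f y <= f x + size p.
Proof.
move=> f_lip /andP[+ /eqP <-]; elim: p x => [|z p IH] x /=; first by rewrite addn0.
case/andP=> exz /IH[]; have := f_lip _ _ exz; rewrite e_sym in exz.
have := f_lip _ _ exz; lia.
Qed.

Lemma walk_via_lipschitz (f : V -> nat) x p y z :
  (forall u v, e u v -> f u <= (f v).+1) -> walk e x p y -> z \in x :: p ->
  (f x - f z) + (f y - f z) <= size p /\ (f z - f x) + (f z - f y) <= size p.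
Proof.
move=> f_lip w /(walk_split w)[p1 [p2 [w1 w2 ->]]].
have [] := walk_lipschitz f_lip w1; have [] := walk_lipschitz f_lip w2; lia.
Qed.

Lemma walk_exit (P Q : pred V) x p y :
  (forall u v, e u v -> P u -> ~~ P v -> Q v) -> P x -> ~~ P y -> walk e x p y ->
  exists2 z, z \in x :: p & Q z.
Proof.
move=> exitQ Px Py /andP[pp /eqP ly]; move: Py; rewrite -ly {ly}.
elim: p x Px pp => [|v p IH] x Px /=; first by rewrite Px.
case/andP=> exv pv Pl; case: (boolP (P v)) => Pv.
  by have [z zp Qz] := IH v Pv pv Pl; exists z => //; rewrite inE zp orbT.
by exists v; [rewrite !inE eqxx orbT | exact: exitQ exv Px Pv].
Qed.

Lemma last_take x0 x p i : i <= size p -> last x (take i p) = nth x0 (x :: p) i.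
Proof. by elim: p x i => [|y p IH] x [|i] //= /IH ->. Qed.

Lemma walk_take x p i : path e x p -> i <= size p ->
  walk e x (take i p) (nth x (x :: p) i).
Proof.
move=> pp le_ip; rewrite -(cat_take_drop i p) cat_path in pp.
by case/andP: pp => pt _; rewrite /walk pt (last_take x) ?eqxx.
Qed.

Lemma walk_drop x p i : path e x p -> i <= size p ->
  walk e (nth x (x :: p) i) (drop i p) (last x p).
Proof.
move=> pp le_ip; rewrite -(cat_take_drop i p) cat_path in pp.
case/andP: pp => _ pd; rewrite /walk -(last_take x) // pd.
by rewrite -last_cat cat_take_drop eqxx.
Qed.

Lemma walk_segment x p i j : path e x p -> i <= j <= size p ->
  exists2 q, walk e (nth x (x :: p) i) q (nth x (x :: p) j) & size q = j - i.
Proof.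
move=> pp /andP[le_ij le_jp]; have /andP[pt _] := walk_take pp le_jp.
have le_i : i <= size (take j p) by rewrite size_takel.
exists (drop i (take j p)); last by rewrite size_drop size_takel.
have := walk_drop pt le_i; rewrite (last_take x) //.
by rewrite -/(take j.+1 (x :: p)) nth_take.
Qed.

Lemma geodesic_segment x p i j q : geodesic e x p -> i <= j <= size p ->
  walk e (nth x (x :: p) i) q (nth x (x :: p) j) -> j - i <= size q.
Proof.
move=> [pp p_min] /andP[le_ij le_jp] wq.
have le_ip := leq_trans le_ij le_jp.
have := p_min (take i p ++ q ++ drop j p).
rewrite size_cat size_takel // size_cat size_drop.
suff /[swap]/[apply] : walk e x (take i p ++ q ++ drop j p) (last x p) by lia.
exact: walk_cat (walk_take pp le_ip) (walk_cat wq (walk_drop pp le_jp)).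
Qed.

Lemma gp_set_sorted (S : {set V}) :
  (forall x p i j k, geodesic e x p -> i < j < k -> k <= size p ->
     nth x (x :: p) i \in S -> nth x (x :: p) j \in S -> nth x (x :: p) k \notin S) ->
  gp_set e S.
Proof.
move=> noS u v w uS vS wS ne_uv ne_vw ne_uw [x [p [geo [ux vx wx]]]].
pose t := [:: index u (x :: p); index v (x :: p); index w (x :: p)].
have t_vals : map (nth x (x :: p)) t = [:: u; v; w] by rewrite /= !nth_index.
have t_uniq : uniq t.
  by apply: (@map_uniq _ _ (nth x (x :: p))); rewrite t_vals /= !inE negb_or ne_uv ne_uw ne_vw.
have t_in_S i : i \in t -> nth x (x :: p) i \in S.
  by move=> /(map_f (nth x (x :: p))); rewrite t_vals !inE => /or3P[] /eqP ->.
have t_le i : i \in t -> i <= size p.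
  by rewrite !inE => /or3P[] /eqP ->; rewrite -ltnS index_mem.
have : sorted ltn (sort leq t).
  by rewrite ltn_sorted_uniq_leq sort_uniq t_uniq (sort_sorted leq_total).
have : size (sort leq t) = 3 by rewrite size_sort.
have := mem_sort leq t.
case: (sort leq t) => [|i [|j [|k []]]] // mem_ijk _ /= /and3P[lt_ij lt_jk _].
have ijk_in_t : [/\ i \in t, j \in t & k \in t] by rewrite -!mem_ijk !inE !eqxx !orbT.
case: ijk_in_t => it jt kt.
have := t_in_S k kt; apply/negP.
by apply: noS geo _ (t_le k kt) (t_in_S i it) (t_in_S j jt); rewrite lt_ij.
Qed.

Lemma gp_setS (S T : {set V}) : T \subset S -> gp_set e S -> gp_set e T.
Proof. by move=> /subsetP sTS gpS u v w /sTS uS /sTS vS /sTS wS; apply: gpS. Qed.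

End Walks.

Section GluedTree.
Variable r : nat.
Local Notation V := (GTV r).
Local Notation adj := (@gt_adj r).
Implicit Types (u v w : V) (c : bool).

Definition gt_index v : nat := (val v).2.
Definition gt_copy v : bool := (val v).1.
Definition quasi_leaf v : bool := 2 ^ r <= gt_index v.

Lemma gt_index_gt0 v : 0 < gt_index v.
Proof. by case: v => [[c i] p]; rewrite /gt_index /=; case/andP: p. Qed.

Lemma gt_index_lt v : gt_index v < 2 ^ r.+1.
Proof. exact: ltn_ord. Qed.

Lemma depth_gt_index v : depth (gt_index v) <= r.
Proof. by rewrite -ltnS depth_lt ?gt_index_gt0 ?gt_index_lt. Qed.

Lemma quasi_leafE v : quasi_leaf v = (depth (gt_index v) == r).
Proof.
by rewrite /quasi_leaf eqn_leq depth_gt_index [r <= _]leqNgt depth_lt ?gt_index_gt0 // -leqNgt.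
Qed.

Lemma quasi_leaf_copy v : quasi_leaf v -> gt_copy v = false.
Proof.
case: v => [[c i] p]; rewrite /quasi_leaf /gt_index /gt_copy /=.
by case/andP: p => _ /implyP le_c /le_c /negbTE.
Qed.

Lemma gt_vertex_eq u v : gt_index u = gt_index v -> gt_copy u = gt_copy v -> u = v.
Proof.
case: u v => [[c i] ?] [[d j] ?]; rewrite /gt_index /gt_copy /= => e_ij e_cd.
by apply: val_inj; congr (_, _) => //; apply: val_inj.
Qed.

Definition gt_root : V.
Proof.
have lt_1 : 1 < 2 ^ r.+1 by rewrite -{1}(expn0 2) ltn_exp2l.
by exists (false, Ordinal lt_1); rewrite /gt_valid /= implybT.
Defined.

(* The copy bit is forced to [false] on quasi-leaves; an index outside
   [1, 2^(r+1)) gives [gt_root]. *)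
Definition gt_vertex c (i : nat) : V :=
  insubd gt_root (c && (i < 2 ^ r), insubd (val gt_root).2 i).

Lemma gt_vertexE c i : 0 < i < 2 ^ r.+1 ->
  gt_index (gt_vertex c i) = i /\ gt_copy (gt_vertex c i) = c && (i < 2 ^ r).
Proof.
move=> /andP[i0 lt_i].
have val_i : val (insubd (val gt_root).2 i : 'I_(2 ^ r.+1)) = i by rewrite val_insubd lt_i.
have valid : @gt_valid r (c && (i < 2 ^ r), insubd (val gt_root).2 i).
  by rewrite /gt_valid /= val_i i0 /=; apply/implyP; rewrite leqNgt; case: ltnP; rewrite ?andbF.
by rewrite /gt_vertex /gt_index /gt_copy val_insubd valid /= val_i.
Qed.

Lemma gt_vertex_index c i : 0 < i < 2 ^ r.+1 -> gt_index (gt_vertex c i) = i.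
Proof. by move/(gt_vertexE c) => []. Qed.

Lemma gt_vertex_copy c i : 0 < i < 2 ^ r.+1 -> gt_copy (gt_vertex c i) = c && (i < 2 ^ r).
Proof. by move/(gt_vertexE c) => []. Qed.

Lemma gt_vertexK v : gt_vertex (gt_copy v) (gt_index v) = v.
Proof.
have i_ok : 0 < gt_index v < 2 ^ r.+1 by rewrite gt_index_gt0 gt_index_lt.
apply: gt_vertex_eq; rewrite ?gt_vertex_index ?gt_vertex_copy //.
case: (ltnP (gt_index v) (2 ^ r)) => [_|le_v]; first by rewrite andbT.
by rewrite andbF quasi_leaf_copy.
Qed.

Lemma gt_vertex_leaf c v : quasi_leaf v -> gt_vertex c (gt_index v) = v.
Proof.
move=> lv; rewrite -[RHS]gt_vertexK quasi_leaf_copy //.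
have i_ok : 0 < gt_index v < 2 ^ r.+1 by rewrite gt_index_gt0 gt_index_lt.
apply: gt_vertex_eq; rewrite ?gt_vertex_index ?gt_vertex_copy //.
by move: lv; rewrite /quasi_leaf leqNgt => /negbTE ->; rewrite !andbF.
Qed.

Lemma gt_adj_sym : symmetric adj.
Proof. by move=> u v; rewrite /gt_adj orbC. Qed.

Lemma gt_adj_half u v :
  adj u v -> gt_index v = (gt_index u)./2 \/ gt_index u = (gt_index v)./2.
Proof. by case/orP=> /andP[/eqP e _]; [right | left]. Qed.

Lemma gt_adj_depth u v : adj u v -> depth (gt_index u) <= (depth (gt_index v)).+1.
Proof.
case/gt_adj_half=> [vu|uv].
  have : 1 < gt_index u by move: (gt_index_gt0 v); rewrite vu; lia.
  by move/depth_half ->; rewrite -vu.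
have : 1 < gt_index v by move: (gt_index_gt0 u); rewrite uv; lia.
by move/depth_half ->; rewrite -uv; lia.
Qed.

Lemma gt_adj_copy u v : adj u v -> ~~ quasi_leaf u -> ~~ quasi_leaf v -> gt_copy u = gt_copy v.
Proof.
rewrite /quasi_leaf -!ltnNge /gt_adj /gt_child /gt_index /gt_copy.
by case/orP=> /andP[_] + lt_u lt_v; rewrite ?lt_u ?lt_v => /eqP.
Qed.

Lemma gt_adj_parent c i : 1 < i < 2 ^ r.+1 -> adj (gt_vertex c i) (gt_vertex c i./2).
Proof.
move=> /andP[i_gt1 lt_i].
have le_half : i./2 <= i by rewrite -divn2 leq_div.
have i_ok : 0 < i < 2 ^ r.+1 by rewrite lt_i andbT ltnW.
have half_ok : 0 < i./2 < 2 ^ r.+1 by rewrite (leq_ltn_trans le_half) // andbT; lia.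
apply/orP; right; rewrite /gt_child.
have := gt_vertexE c i_ok; have := gt_vertexE c half_ok.
rewrite /gt_index /gt_copy => -[-> ->] [-> ->]; rewrite eqxx /=; case: ifP => // lt_ir.
by rewrite (leq_ltn_trans le_half lt_ir) lt_ir.
Qed.

Fixpoint ascent c (i n : nat) : seq V :=
  if n is n'.+1 then gt_vertex c i./2 :: ascent c i./2 n' else [::].

Lemma size_ascent c i n : size (ascent c i n) = n.
Proof. by elim: n i => //= n IH i; rewrite IH. Qed.

Lemma walk_ascent c i n : 0 < i %/ 2 ^ n -> i < 2 ^ r.+1 ->
  walk adj (gt_vertex c i) (ascent c i n) (gt_vertex c (i %/ 2 ^ n)).
Proof.
elim: n i => [|n IH] i top_gt0 lt_i; first by rewrite /walk /= expn0 divn1; apply/eqP.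
have top_eq : i %/ 2 ^ n.+1 = i./2 %/ 2 ^ n by rewrite expnS divnMA divn2.
have i_gt1 : 1 < i.
  have : 2 <= 2 ^ n.+1 by rewrite -{1}(expn1 2) leq_exp2l.
  by move: top_gt0; rewrite divn_gt0 ?expn_gt0 //; lia.
have lt_half : i./2 < 2 ^ r.+1 by apply: leq_ltn_trans lt_i; rewrite -divn2 leq_div.
rewrite top_eq in top_gt0 *; have /andP[p_half l_half] := IH i./2 top_gt0 lt_half.
by rewrite /walk /= gt_adj_parent ?i_gt1 //= p_half.
Qed.

Lemma mem_ascent c i n s : 0 < s <= n -> gt_vertex c (i %/ 2 ^ s) \in ascent c i n.
Proof.
elim: n i s => [|n IH] i [|s] //= le_sn; rewrite inE.
case: s le_sn => [|s] le_sn; first by rewrite expn1 divn2 eqxx.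
have -> : i %/ 2 ^ s.+2 = i./2 %/ 2 ^ s.+1 by rewrite expnS divnMA divn2.
by rewrite IH ?orbT.
Qed.

Lemma leaves_divn_eq x y s : quasi_leaf x -> quasi_leaf y -> r <= s ->
  gt_index x %/ 2 ^ s = gt_index y %/ 2 ^ s.
Proof.
rewrite !quasi_leafE => /eqP dx /eqP dy /divn_exp2_eq_mono; apply.
by rewrite -{1}dx -dy !divn_exp2_depth ?gt_index_gt0.
Qed.

(* Edges between non-leaves preserve the copy, so such a walk visits a quasi-leaf. *)
Lemma walk_copy_change_size c k q : 0 < k < 2 ^ r ->
  walk adj (gt_vertex c k) q (gt_vertex (~~ c) k) -> 2 * (r - depth k) <= size q.
Proof.
move=> /andP[k0 lt_k] w.
have k_ok : 0 < k < 2 ^ r.+1 by rewrite k0 (ltn_trans lt_k) // ltn_exp2l.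
pose P v := ~~ quasi_leaf v && (gt_copy v == c).
have [z zq] : exists2 z, z \in gt_vertex c k :: q & quasi_leaf z.
  apply: (walk_exit (P := P)) w.
  - move=> u v adj_uv /andP[nl_u /eqP cu]; apply: contraR => nl_v.
    by rewrite /P nl_v -(gt_adj_copy adj_uv nl_u nl_v) cu eqxx.
  - by rewrite /P /quasi_leaf gt_vertex_index // gt_vertex_copy // -ltnNge lt_k andbT eqxx.
  - by rewrite /P gt_vertex_copy // lt_k andbT (_ : (~~ c == c) = false) ?andbF //; case: (c).
rewrite quasi_leafE => /eqP dz.
have [_] := walk_via_lipschitz gt_adj_sym (@gt_adj_depth) w zq.
by rewrite dz !gt_vertex_index //; lia.
Qed.

Lemma walk_exit_subtree_size a x q y : ancestor a (gt_index x) -> ~~ ancestor a (gt_index y) ->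
  walk adj x q y ->
  (depth (gt_index x) - depth a./2) + (depth (gt_index y) - depth a./2) <= size q.
Proof.
move=> ax nay w.
have [z zq /eqP iz] : exists2 z, z \in x :: q & gt_index z == a./2.
  apply: (walk_exit (P := fun v => ancestor a (gt_index v))) ax nay w => u v adj_uv au nav.
  apply/eqP; apply: ancestor_exit au nav (gt_adj_half adj_uv); exact: gt_index_gt0.
have [+ _] := walk_via_lipschitz gt_adj_sym (@gt_adj_depth) w zq.
by rewrite iz.
Qed.

Lemma walk_leaves_size x y s q : quasi_leaf x -> quasi_leaf y ->
  gt_index x %/ 2 ^ s != gt_index y %/ 2 ^ s -> walk adj x q y -> 2 * s.+1 <= size q.
Proof.
move=> lx ly ne w; have lt_sr : s < r.
  by rewrite ltnNge; apply: contra ne => /(leaves_divn_eq lx ly) ->.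
move: (lx) (ly); rewrite !quasi_leafE => /eqP dx /eqP dy.
have x0 := gt_index_gt0 x; set a := gt_index x %/ 2 ^ s.
have da : depth a = r - s by rewrite depth_divn ?dx //; lia.
have ax : ancestor a (gt_index x) by apply: ancestor_divn; lia.
have nay : ~~ ancestor a (gt_index y) by rewrite /ancestor dy da subKn 1?eq_sym // ltnW.
have half_a : a./2 = gt_index x %/ 2 ^ s.+1 by rewrite expnSr divnMA divn2.
by have := walk_exit_subtree_size ax nay w; rewrite half_a depth_divn ?dx //; lia.
Qed.

Lemma walk_leaves_meet x y q : quasi_leaf x -> quasi_leaf y -> walk adj x q y ->
  gt_index x %/ 2 ^ (size q)./2 = gt_index y %/ 2 ^ (size q)./2.
Proof.
move=> lx ly w; apply/eqP; apply: contraT => ne.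
by have := walk_leaves_size lx ly ne w; lia.
Qed.

Lemma walk_across c x y t : quasi_leaf x -> quasi_leaf y -> t <= r ->
  gt_index x %/ 2 ^ t = gt_index y %/ 2 ^ t ->
  exists q, [/\ walk adj x q y, size q = 2 * t & gt_vertex c (gt_index x %/ 2 ^ t) \in x :: q].
Proof.
move=> lx ly le_tr e_xy.
have top_gt0 z : quasi_leaf z -> 0 < gt_index z %/ 2 ^ t.
  by rewrite quasi_leafE => /eqP dz; apply: divn_exp2_gt0; rewrite ?gt_index_gt0 ?dz.
have wx := walk_ascent c (top_gt0 _ lx) (gt_index_lt x).
have wy := walk_ascent c (top_gt0 _ ly) (gt_index_lt y).
rewrite !gt_vertex_leaf // in wx wy; rewrite -e_xy in wy.
exists (ascent c (gt_index x) t ++ rev (belast y (ascent c (gt_index y) t))); split.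
- exact: walk_cat wx (walk_rev gt_adj_sym wy).
- by rewrite size_cat size_rev size_belast !size_ascent; lia.
- case/andP: wx => _ /eqP <-.
  by rewrite -cat_cons mem_cat mem_last.
Qed.

Lemma short_walk_leaves x y t : quasi_leaf x -> quasi_leaf y ->
  gt_index x %/ 2 ^ t = gt_index y %/ 2 ^ t -> exists2 q, walk adj x q y & size q <= 2 * t.
Proof.
move=> lx ly e_xy; have e_min : gt_index x %/ 2 ^ minn t r = gt_index y %/ 2 ^ minn t r.
  by case: leqP => // /ltnW le_rt; apply: leaves_divn_eq.
have [q [w sq _]] := walk_across true lx ly (geq_minr t r) e_min.
by exists q; rewrite // sq leq_mul2l geq_minl orbT.
Qed.

Lemma geodesic_through_leaf c k l : 0 < k < 2 ^ r -> 0 < l -> depth l = r -> ancestor k l ->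
  exists p, geodesic adj (gt_vertex c k) p /\
    forall v, ancestor k (gt_index v) -> ancestor (gt_index v) l -> v \in gt_vertex c k :: p.
Proof.
move=> k_ok l0 dl kl; set t := r - depth k.
have lt_l : l < 2 ^ r.+1 by rewrite -depth_lt // dl.
have top_l : l %/ 2 ^ t = k by move/eqP: kl; rewrite /ancestor dl.
have top_gt0 : 0 < l %/ 2 ^ t by rewrite top_l; case/andP: k_ok.
have leaf_l d : gt_vertex d l = gt_vertex c l.
  apply: gt_vertex_eq; rewrite ?gt_vertex_index ?gt_vertex_copy ?l0 //.
  by rewrite -depth_lt // dl ltnn !andbF.
have w_down := walk_rev gt_adj_sym (walk_ascent c top_gt0 lt_l).
have w_up := walk_ascent (~~ c) top_gt0 lt_l.
have /andP[_ /eqP last_down] := walk_ascent c top_gt0 lt_l.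
rewrite top_l leaf_l in w_down w_up last_down.
exists (rev (belast (gt_vertex c l) (ascent c l t)) ++ ascent (~~ c) l t); split.
  case/andP: (walk_cat w_down w_up) => pp /eqP lp; split => // q; rewrite lp => wq.
  have := walk_copy_change_size k_ok wq.
  by rewrite size_cat size_rev size_belast !size_ascent; lia.
move=> v kv vl; rewrite -cat_cons -{1}last_down rev_belast_cons mem_cat mem_rev.
set s := r - depth (gt_index v).
have le_st : s <= t by have := ancestor_depth kv; rewrite /s /t; lia.
have iv : gt_index v = l %/ 2 ^ s by move/eqP: vl; rewrite /ancestor dl.
have [s0|s_gt0] := posnP s.
  have lv : quasi_leaf v by rewrite quasi_leafE eqn_leq depth_gt_index /=; lia.
  by rewrite -(gt_vertex_leaf c lv) iv s0 expn0 divn1 mem_head.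
have := mem_ascent (gt_copy v) l (introT andP (conj s_gt0 le_st)).
rewrite -iv gt_vertexK inE.
by case: (gt_copy v) (c) => -[] ->; rewrite ?orbT.
Qed.

Lemma leaves_across_geodesic c x y n : quasi_leaf x -> quasi_leaf y ->
  gt_index x %/ 2 ^ n.+1 = gt_index y %/ 2 ^ n.+1 -> gt_index x %/ 2 ^ n != gt_index y %/ 2 ^ n ->
  on_common_geodesic adj x (gt_vertex c (gt_index x %/ 2 ^ n.+1)) y.
Proof.
move=> lx ly e_xy ne_xy; have lt_nr : n < r.
  by rewrite ltnNge; apply: contra ne_xy => /(leaves_divn_eq lx ly) ->.
have [q [w sq mem_top]] := walk_across c lx ly lt_nr e_xy.
exists x, q; split; last by rewrite mem_head mem_top; case/andP: w => _ /eqP <-; rewrite mem_last.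
case/andP: (w) => pq /eqP lq; split => // q'; rewrite lq sq => w'.
exact: walk_leaves_size lx ly ne_xy w'.
Qed.

Lemma gp_set_leaves : gp_set adj [set v | quasi_leaf v].
Proof.
apply: gp_set_sorted => x p i j k geo /andP[lt_ij lt_jk] le_kp.
rewrite !inE => li lj; apply/negP => lk.
have meet m n : m <= n <= size p ->
    quasi_leaf (nth x (x :: p) m) -> quasi_leaf (nth x (x :: p) n) ->
    gt_index (nth x (x :: p) m) %/ 2 ^ (n - m)./2 = gt_index (nth x (x :: p) n) %/ 2 ^ (n - m)./2.
  by move=> mn lm ln; have [q w <-] := walk_segment geo.1 mn; apply: walk_leaves_meet.
have e_ij := meet i j (introT andP (conj (ltnW lt_ij) (ltnW (leq_trans lt_jk le_kp)))) li lj.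
have e_jk := meet j k (introT andP (conj (ltnW lt_jk) le_kp)) lj lk.
set M := maxn (j - i)./2 (k - j)./2.
have e_ik : gt_index (nth x (x :: p) i) %/ 2 ^ M = gt_index (nth x (x :: p) k) %/ 2 ^ M.
  by rewrite (divn_exp2_eq_mono (leq_maxl _ _) e_ij) (divn_exp2_eq_mono (leq_maxr _ _) e_jk).
have [q w sq] := short_walk_leaves li lk e_ik.
have := geodesic_segment geo _ w; rewrite (ltnW (ltn_trans lt_ij lt_jk)) le_kp => /(_ isT).
by move: sq lt_ij lt_jk; rewrite /M; clear; lia.
Qed.

Lemma card_leaves : #|[set v | quasi_leaf v]| = 2 ^ r.
Proof.
have pow_gt0 : 0 < 2 ^ r by rewrite expn_gt0.
have j_ok (j : 'I_(2 ^ r)) : 0 < 2 ^ r + j < 2 ^ r.+1.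
  by rewrite expnS ltn_addr //= mul2n -addnn ltn_add2l.
pose f (j : 'I_(2 ^ r)) := gt_vertex false (2 ^ r + j).
have f_inj : injective f.
  by move=> j1 j2 /(congr1 gt_index); rewrite !gt_vertex_index // => /addnI /val_inj.
suff -> : [set v | quasi_leaf v] = f @: setT by rewrite card_imset // cardsT card_ord.
apply/setP => v; rewrite inE; apply/idP/imsetP => [lv|[j _ ->]].
  have lt_j : gt_index v - 2 ^ r < 2 ^ r.
    by move: lv (gt_index_lt v); rewrite /quasi_leaf expnS; lia.
  by exists (Ordinal lt_j); rewrite // /f /= subnKC // gt_vertex_leaf.
by rewrite /quasi_leaf gt_vertex_index // leq_addr.
Qed.

Lemma gp_ancestors_of_leaf c k l (S : {set V}) v w : gp_set adj S -> 0 < k < 2 ^ r ->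
  gt_vertex c k \in S -> v \in S :\ gt_vertex c k -> w \in S :\ gt_vertex c k ->
  0 < l -> depth l = r -> ancestor k (gt_index v) -> ancestor k (gt_index w) ->
  ancestor (gt_index v) l -> ancestor (gt_index w) l -> v = w.
Proof.
move=> gpS k_ok zS /setD1P[ne_vz vS] /setD1P[ne_wz wS] l0 dl kv kw vl wl.
have [p [geo on_p]] := geodesic_through_leaf c k_ok l0 dl (ancestor_trans kv vl).
case: (eqVneq v w) => // ne_vw; exfalso.
apply: (gpS _ _ _ zS vS wS); rewrite ?(eq_sym (gt_vertex c k)) //.
by exists (gt_vertex c k), p; split; rewrite ?mem_head ?on_p.
Qed.

Lemma leaf_below_subtree k v j : ancestor k (gt_index v) -> j < 2 ^ (r - depth (gt_index v)) ->
  let l := leaf_below r (gt_index v) j in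
  [/\ 0 < l, depth l = r, ancestor (gt_index v) l & l %/ 2 ^ (r - depth k) = k].
Proof.
move=> kv lt_j l; have v_gt0 := gt_index_gt0 v.
have dl : depth l = r by apply: depth_leaf_below; rewrite ?depth_gt_index.
have vl : ancestor (gt_index v) l by apply: ancestor_leaf_below; rewrite ?depth_gt_index.
split=> //; first by rewrite /l /leaf_below addn_gt0 muln_gt0 v_gt0 expn_gt0.
by move/eqP: (ancestor_trans kv vl); rewrite /ancestor dl.
Qed.

Lemma card_gp_nonleaf c k (S : {set V}) : gp_set adj S -> 0 < k < 2 ^ r ->
  gt_vertex c k \in S -> {in S, forall v, ancestor k (gt_index v)} ->
  [exists v in S :\ gt_vertex c k, ~~ quasi_leaf v] ->
  #|S :\ gt_vertex c k| < 2 ^ (r - depth k).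
Proof.
move=> gpS k_ok zS Sk /existsP[v0 /andP[v0S nl_v0]].
set S' := S :\ gt_vertex c k; set N := 2 ^ (r - depth k).
have N_gt0 : 0 < N by rewrite expn_gt0.
have S'k v : v \in S' -> ancestor k (gt_index v) by case/setD1P=> _ /Sk.
have same_leaf v w j j' : v \in S' -> w \in S' ->
    j < 2 ^ (r - depth (gt_index v)) -> j' < 2 ^ (r - depth (gt_index w)) ->
    leaf_below r (gt_index v) j %% N = leaf_below r (gt_index w) j' %% N ->
    v = w /\ leaf_below r (gt_index v) j = leaf_below r (gt_index w) j'.
  move=> vS wS lt_j lt_j' e_mod.
  have [l0 dl vl lk] := leaf_below_subtree (S'k v vS) lt_j.
  have [_ _ wl' lk'] := leaf_below_subtree (S'k w wS) lt_j'.
  have e_l : leaf_below r (gt_index v) j = leaf_below r (gt_index w) j'.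
    by rewrite (divn_eq (leaf_below _ _ j) N) (divn_eq (leaf_below _ _ j') N) lk lk' e_mod.
  split=> //; rewrite -e_l in wl'.
  exact: gp_ancestors_of_leaf gpS k_ok zS vS wS l0 dl (S'k v vS) (S'k w wS) vl wl'.
have pow_gt0 m : 0 < 2 ^ m by rewrite expn_gt0.
set d := r - depth (gt_index v0).
have d_gt0 : 0 < d by rewrite subn_gt0 ltn_neqAle depth_gt_index andbT -quasi_leafE.
have lt_last : 2 ^ d - 1 < 2 ^ d by have := pow_gt0 d; lia.
(* A quasi-leaf below k is determined by its index modulo N. *)
pose f v : 'I_N := Ordinal (ltn_pmod (leaf_below r (gt_index v) 0) N_gt0).
rewrite -[N]card_ord.
pose rightmost : 'I_N := Ordinal (ltn_pmod (leaf_below r (gt_index v0) (2 ^ d - 1)) N_gt0).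
apply: (@card_in_inj_lt _ _ f _ rightmost).
  by move=> v w vS wS /(congr1 val) /= /(same_leaf v w 0 0 vS wS (pow_gt0 _) (pow_gt0 _)) [].
move=> w wS; apply/negP => /eqP/(congr1 val) /= e_mod.
have [-> /addnI] := same_leaf w v0 0 (2 ^ d - 1) wS v0S (pow_gt0 _) lt_last e_mod.
have : 2 <= 2 ^ d by rewrite -{1}(expn1 2) leq_exp2l.
lia.
Qed.

Section SubtreeStep.
Variable n : nat.
Hypothesis card_gp_subtree_n : forall k (S : {set V}), 0 < k -> depth k + n = r ->
  gp_set adj S -> {in S, forall v, ancestor k (gt_index v)} -> #|S| <= 2 ^ n.

Lemma card_gp_rootless k (S : {set V}) : 0 < k -> depth k + n.+1 = r -> gp_set adj S ->
  {in S, forall v, ancestor k (gt_index v)} -> (forall c, gt_vertex c k \notin S) ->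
  #|S| <= 2 ^ n.+1.
Proof.
move=> k0 dk gpS Sk no_root.
pose S_ (b : bool) := [set v in S | ancestor (b + k.*2) (gt_index v)].
have card_half b : #|S_ b| <= 2 ^ n.
  apply: (@card_gp_subtree_n (b + k.*2)).
  - by rewrite addn_gt0 double_gt0 k0 orbT.
  - by rewrite depth_half ?half_bit_double; [lia | case: b; rewrite ?add0n ?add1n; lia].
  - by apply: gp_setS gpS; apply/subsetP => v; rewrite inE => /andP[].
  - by move=> v; rewrite inE => /andP[].
have : S \subset S_ false :|: S_ true.
  apply/subsetP => v vS; rewrite !inE vS /=.
  have ne_vk : gt_index v != k.
    by apply: contraNneq (no_root (gt_copy v)) => <-; rewrite gt_vertexK.
  exact: ancestor_children (gt_index_gt0 v) (Sk v vS) ne_vk.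
move/subset_leq_card/leq_trans; apply; rewrite expnS mul2n -addnn.
exact: leq_trans (leq_card_setU _ _) (leq_add (card_half false) (card_half true)).
Qed.

Lemma card_gp_root_leaves c k (S : {set V}) : depth k + n.+1 = r -> gp_set adj S ->
  gt_vertex c k \in S -> {in S, forall v, ancestor k (gt_index v)} ->
  {in S :\ gt_vertex c k, forall v, quasi_leaf v} -> #|S :\ gt_vertex c k| <= 2 ^ n.
Proof.
move=> dk gpS zS Sk S'leaf; set S' := S :\ gt_vertex c k.
have [-> | [u0 u0S]] := set_0Vmem S'; first by rewrite cards0.
have d_leaf v : v \in S' -> depth (gt_index v) = r by move/S'leaf; rewrite quasi_leafE => /eqP.
have top v : v \in S' -> gt_index v %/ 2 ^ n.+1 = k.
  move=> vS; have /eqP := Sk v (setD1P vS).2.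
  by rewrite /ancestor d_leaf // (_ : r - depth k = n.+1) //; lia.
have same_half v : v \in S' -> gt_index v %/ 2 ^ n = gt_index u0 %/ 2 ^ n.
  move=> vS; case: (eqVneq (gt_index v %/ 2 ^ n) (gt_index u0 %/ 2 ^ n)) => // ne; exfalso.
  have := leaves_across_geodesic c (S'leaf v vS) (S'leaf u0 u0S)
    (etrans (top v vS) (esym (top u0 u0S))) ne.
  rewrite top //; case/setD1P: vS => ne_vz vS; case/setD1P: u0S => ne_uz uS.
  apply: gpS vS zS uS ne_vz _ _; first by rewrite eq_sym.
  by apply: contra_neq ne => ->.
have le_nr : n <= depth (gt_index u0) by rewrite d_leaf //; lia.
apply: (@card_gp_subtree_n (gt_index u0 %/ 2 ^ n)).
- exact: divn_exp2_gt0 (gt_index_gt0 u0) le_nr.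
- by rewrite depth_divn ?gt_index_gt0 // subnK // d_leaf.
- exact: gp_setS (subD1set S _) gpS.
move=> v vS; rewrite /ancestor depth_divn ?gt_index_gt0 // (d_leaf v) // (d_leaf u0) //.
by rewrite subKn ?same_half; last lia.
Qed.

End SubtreeStep.

Lemma card_gp_subtree n k (S : {set V}) : 0 < k -> depth k + n = r -> gp_set adj S ->
  {in S, forall v, ancestor k (gt_index v)} -> #|S| <= 2 ^ n.
Proof.
elim: n k S => [|n IH] k S k0 dk gpS Sk.
  rewrite expn0 -(cards1 (gt_vertex false k)); apply/subset_leq_card/subsetP => v vS.
  rewrite addn0 in dk; have kv := Sk v vS; have le_kv := ancestor_depth kv.
  have lv : quasi_leaf v by rewrite dk in le_kv; rewrite quasi_leafE eqn_leq depth_gt_index le_kv.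
  move/eqP: kv; rewrite /ancestor (_ : _ - _ = 0) ?expn0 ?divn1 => [ek|].
    by rewrite inE -ek gt_vertex_leaf.
  by have := depth_gt_index v; lia.
have k_ok : 0 < k < 2 ^ r by rewrite k0 -depth_lt //; lia.
have [/existsP[c zS]|] := boolP [exists c, gt_vertex c k \in S]; last first.
  by rewrite negb_exists => /forallP; exact: (card_gp_rootless IH k0 dk gpS Sk).
rewrite (cardsD1 (gt_vertex c k)) zS add1n.
have [nonleaf|] := boolP [exists v in S :\ gt_vertex c k, ~~ quasi_leaf v].
  by have := card_gp_nonleaf gpS k_ok zS Sk nonleaf; rewrite (_ : r - depth k = n.+1) //; lia.
rewrite negb_exists => /forallP all_leaf.
have S'leaf : {in S :\ gt_vertex c k, forall v, quasi_leaf v}.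
  by move=> v vS; move: (all_leaf v); rewrite vS negbK.
have := card_gp_root_leaves IH dk gpS zS Sk S'leaf.
by rewrite expnS; have := expn_gt0 2 n; lia.
Qed.

End GluedTree.

Theorem proposition3p8 (r : nat) (hr : 2 <= r) :
  is_gp_number (@gt_adj r) (2 ^ r).
Proof.
split; first by exists [set v | quasi_leaf v]; split; [apply: gp_set_leaves | apply: card_leaves].
move=> S gpS; apply: (card_gp_subtree (k := 1)) => // v _.
exact/ancestor1/gt_index_gt0.
Qed.
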